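(* Let $n_1,n_2\ge 1$ be integers, $n=n_1+n_2$, and consider a uniformly random arrangement of $n_1$ symbols $x$ and $n_2$ symbols $y$ (all $\binom{n}{n_1}$ arrangements equally likely). Let $R_1$ and $R_2$ be the numbers of runs of $x$'s and of $y$'s, respectively, and $R_M=\max(R_1,R_2)$. Then (i) $E(R_M\mid R_1>R_2)=2+\dfrac{(n_1-2)(n_2-1)}{n-2}$; (ii) $E(R_M\mid R_1<R_2)=2+\dfrac{(n_1-1)(n_2-2)}{n-2}$; (iii) $E(R_M\mid R_1=R_2)=1+\dfrac{(n_1-1)(n_2-1)}{n-2}$.
   Context: A run is a maximal block of consecutive identical symbols in the arrangement. Conditional expectations given an event are considered when that event has positive probability. *)

From mathcomp Require Import all_boot all_order all_algebra.
Set Implicit Arguments. Unset Strict Implicit. Unset Printing Implicit Defensive.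
Import Order.TTheory GRing.Theory Num.Theory.

(* An arrangement of n1 x's and n2 y's is a (n1+n2)-tuple of booleans,
   true = symbol x, false = symbol y, with exactly n1 entries equal to true. *)
Definition arrangements (n1 n2 : nat) : {set (n1 + n2).-tuple bool} :=
  [set s : (n1 + n2).-tuple bool | count id s == n1].

Definition runs (b : bool) (s : seq bool) : nat :=
  count (fun i => (nth false s i == b) && ((i == 0) || (nth false s i.-1 != b)))
        (iota 0 (size s)).

Definition R1 (s : seq bool) : nat := runs true s.
Definition R2 (s : seq bool) : nat := runs false s.
Definition RM (s : seq bool) : nat := maxn (R1 s) (R2 s).

Definition cond_exp (n1 n2 : nat) (X : seq bool -> nat) (E : pred (seq bool)) : rat :=
  ((\sum_(s in arrangements n1 n2 | E (val s)) (X (val s))%:R) /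
   (#|[set s in arrangements n1 n2 | E (val s)]|)%:R)%R.

Definition event_count (n1 n2 : nat) (E : pred (seq bool)) : nat :=
  #|[set s in arrangements n1 n2 | E (val s)]|.

From mathcomp Require Import all_boot all_order all_algebra.
From mathcomp Require Import zify.
Import Order.TTheory GRing.Theory Num.Theory.

(* Write an arrangement as h :: m ++ [l]. Runs of x and y alternate, so
   R1 + [l = y] = R2 + [h = x]: the three events are "both ends are x", "both
   ends are y" and "the ends differ", and in each case R_M is one more than the
   number of runs in the middle block m of the symbol opposite to l. Summing the
   number of runs of a symbol over all blocks of length k with a x's (a
   recursion on the first symbol, closed by Pascal's rule) gives 'C(k, a) times
   a (k - a + [preceded by y]) / k for x and (k - a) (a + [preceded by x]) / k
   for y, and the three conditional expectations follow. *)

(* A run of [b] at the head of [s] counts only if [p], the symbol preceding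
   [s], differs from [b]. *)
Fixpoint runs_after (b p : bool) (s : seq bool) : nat :=
  if s is x :: t then ((x == b) && (p != b)) + runs_after b x t else 0.

Lemma runs_runs_after b s : runs b s = runs_after b (~~ b) s.
Proof.
have count_runs_after p t :
  count (fun i => (nth false t i == b) &&
           (if i is j.+1 then nth false t j != b else p != b)) (iota 0 (size t))
  = runs_after b p t.
  elim: t p => [|x t IH] p //=.
  rewrite -(IH x) (iotaDl 1 0) count_map; congr (_ + _).
  by apply: eq_count => -[|i].
rewrite /runs -count_runs_after {count_runs_after}; apply: eq_count => -[|i] //=.
by case: b.
Qed.

Lemma runs_after_rcons b p s x :
  runs_after b p (rcons s x) = runs_after b p s + ((x == b) && (last p s != b)).
Proof. by elim: s p => [|y s IH] p /=; rewrite ?addn0 // IH addnA. Qed.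

Lemma runs_after_balance p s :
  runs_after true p s + ~~ last p s = runs_after false p s + ~~ p.
Proof.
elim: s p => [|x s IH] p /=; first by rewrite addnC.
by rewrite -addnA IH; case: x; case: p => /=; lia.
Qed.

Lemma runs_after_count0 p s : count id s = 0 -> runs_after true p s = 0.
Proof. by elim: s p => [|[] s IH] p //= /IH ->. Qed.

Lemma R1_R2_ends h m l : R1 (h :: rcons m l) + ~~ l = R2 (h :: rcons m l) + h.
Proof.
rewrite /R1 /R2 !runs_runs_after /=.
by have := runs_after_balance h (rcons m l); rewrite last_rcons; case: h => /=; lia.
Qed.

Lemma RM_ends h m l : RM (h :: rcons m l) = (runs_after (~~ l) h m).+1.
Proof.
have := R1_R2_ends h m l; rewrite /RM /R1 /R2 !runs_runs_after /= !runs_after_rcons.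
by case: h; case: l => /=; rewrite ?andbF; lia.
Qed.

Lemma R2_lt_R1_ends h m l : (R2 (h :: rcons m l) < R1 (h :: rcons m l))%N = h && l.
Proof. by have := R1_R2_ends h m l; case: h; case: l => /= E; apply/idP/idP; lia. Qed.

Lemma R1_lt_R2_ends h m l : (R1 (h :: rcons m l) < R2 (h :: rcons m l))%N = ~~ h && ~~ l.
Proof. by have := R1_R2_ends h m l; case: h; case: l => /= E; apply/idP/idP; lia. Qed.

Lemma R1_eq_R2_ends h m l : (R1 (h :: rcons m l) == R2 (h :: rcons m l)) = (h != l).
Proof. by have := R1_R2_ends h m l; case: h; case: l => /= E; apply/idP/idP; lia. Qed.

Fixpoint arr_enum (n a : nat) : seq (seq bool) :=
  if n is n'.+1 then
    (if a is a'.+1 then map (cons true) (arr_enum n' a') else [::])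
      ++ map (cons false) (arr_enum n' a)
  else (if a is 0 then [:: [::]] else [::]).

Lemma mem_map_cons (x : bool) s L :
  (s \in map (cons x) L) = (ohead s == Some x) && (behead s \in L).
Proof.
apply/mapP/andP => [[t tL ->]|]; first by rewrite eqxx.
by case: s => [[]|y s [/eqP [->] sL]]; last exists s.
Qed.

Lemma mem_arr_enum n a s : (s \in arr_enum n a) = (size s == n) && (count id s == a).
Proof.
elim: n a s => [|n IH] [|a] [|[] s] //=;
  by rewrite ?mem_cat !mem_map_cons /= ?IH ?orbF ?andbF ?add1n ?eqSS.
Qed.

Lemma uniq_arr_enum n a : uniq (arr_enum n a).
Proof.
elim: n a => [|n IH] [|a] //=; rewrite ?cat_uniq !map_inj_uniq ?IH //=;
  try by move=> s t [].
rewrite andbT; apply/hasPn => s /mapP [t _ ->].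
by rewrite mem_map_cons.
Qed.

Lemma size_arr_enum n a : size (arr_enum n a) = 'C(n, a).
Proof.
by elim: n a => [|n IH] [|a] //=; rewrite ?size_cat !size_map !IH ?bin0 // binS addnC.
Qed.

Lemma perm_arr_enum_rev n a : perm_eq (map rev (arr_enum n a)) (arr_enum n a).
Proof.
apply: uniq_perm; rewrite ?map_inj_uniq ?uniq_arr_enum //; first exact: can_inj revK.
move=> s; rewrite -{1}(revK s) (mem_map (can_inj revK)).
by rewrite !mem_arr_enum size_rev count_rev.
Qed.

Lemma big_arr_enum_rev (P : pred (seq bool)) (F : seq bool -> nat) n a :
  \sum_(s <- arr_enum n a | P s) F s = \sum_(s <- arr_enum n a | P (rev s)) F (rev s).
Proof. by rewrite -(perm_big _ (perm_arr_enum_rev n a)) big_map. Qed.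

Lemma big_arr_enum_cons (P : pred (seq bool)) (F : seq bool -> nat) n a :
  \sum_(s <- arr_enum n.+1 a | P s) F s =
  (if a is a'.+1 then \sum_(t <- arr_enum n a' | P (true :: t)) F (true :: t) else 0)
  + \sum_(t <- arr_enum n a | P (false :: t)) F (false :: t).
Proof. by case: a => [|a] /=; rewrite ?big_cat !big_map ?big_nil. Qed.

Lemma big_arr_enum_rcons (P : pred (seq bool)) (F : seq bool -> nat) n a :
  \sum_(s <- arr_enum n.+1 a | P s) F s =
  (if a is a'.+1 then \sum_(t <- arr_enum n a' | P (rcons t true)) F (rcons t true) else 0)
  + \sum_(t <- arr_enum n a | P (rcons t false)) F (rcons t false).
Proof.
rewrite big_arr_enum_rev big_arr_enum_cons.
rewrite (big_arr_enum_rev (fun t => P (rcons t false))).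
case: a => [|a]; rewrite ?(big_arr_enum_rev (fun t => P (rcons t true)));
  by congr (_ + _); apply: eq_big => t; rewrite ?rev_cons.
Qed.

Lemma big_arr_enum_ends (P : pred (seq bool)) (F : seq bool -> nat) k a :
  \sum_(s <- arr_enum k.+2 a.+1 | P s) F s =
  (if a is a'.+1 then
     \sum_(m <- arr_enum k a' | P (true :: rcons m true)) F (true :: rcons m true)
   else 0)
  + \sum_(m <- arr_enum k a | P (true :: rcons m false)) F (true :: rcons m false)
  + \sum_(m <- arr_enum k a | P (false :: rcons m true)) F (false :: rcons m true)
  + \sum_(m <- arr_enum k a.+1 | P (false :: rcons m false)) F (false :: rcons m false).
Proof.
rewrite big_arr_enum_cons (big_arr_enum_rcons (fun t => P (true :: t)))
  (big_arr_enum_rcons (fun t => P (false :: t))).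
by case: a => [|a] /=; rewrite !addnA.
Qed.

Lemma big_R2_lt_R1 (F : seq bool -> nat) k a :
  \sum_(s <- arr_enum k.+2 a.+1 | (R2 s < R1 s)%N) F s =
  if a is a'.+1 then \sum_(m <- arr_enum k a') F (true :: rcons m true) else 0.
Proof.
rewrite big_arr_enum_ends; case: a => [|a] /=;
  by rewrite !(eq_bigl _ _ (fun m => R2_lt_R1_ends _ m _)) /= !big_pred0_eq ?addn0.
Qed.

Lemma big_R1_lt_R2 (F : seq bool -> nat) k a :
  \sum_(s <- arr_enum k.+2 a.+1 | (R1 s < R2 s)%N) F s =
  \sum_(m <- arr_enum k a.+1) F (false :: rcons m false).
Proof.
rewrite big_arr_enum_ends; case: a => [|a] /=;
  by rewrite !(eq_bigl _ _ (fun m => R1_lt_R2_ends _ m _)) /= !big_pred0_eq.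
Qed.

Lemma big_R1_eq_R2 (F : seq bool -> nat) k a :
  \sum_(s <- arr_enum k.+2 a.+1 | R1 s == R2 s) F s =
  \sum_(m <- arr_enum k a) F (true :: rcons m false)
  + \sum_(m <- arr_enum k a) F (false :: rcons m true).
Proof.
rewrite big_arr_enum_ends; case: a => [|a] /=;
  by rewrite !(eq_bigl _ _ (fun m => R1_eq_R2_ends _ m _)) /= !big_pred0_eq ?addn0.
Qed.

Lemma big_arrangements n1 n2 (P : pred (seq bool)) (F : seq bool -> nat) :
  \sum_(s in arrangements n1 n2 | P (val s)) F (val s)
  = \sum_(s <- arr_enum (n1 + n2) n1 | P s) F s.
Proof.
rewrite -big_enum_cond -(big_map val P F); apply/perm_big/uniq_perm.
- by rewrite map_inj_uniq ?enum_uniq //; exact: val_inj.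
- exact: uniq_arr_enum.
move=> s; rewrite mem_arr_enum; apply/mapP/andP => [[t]|[Hs Hc]].
  by rewrite mem_enum inE => /eqP Hc ->; rewrite size_tuple Hc eqxx.
by exists (Tuple Hs); rewrite // mem_enum inE.
Qed.

Lemma event_count_arr_enum n1 n2 (E : pred (seq bool)) :
  event_count n1 n2 E = \sum_(s <- arr_enum (n1 + n2) n1 | E s) 1.
Proof.
rewrite /event_count -sum1_card -(big_arrangements n1 n2 E (fun _ => 1)).
by apply: eq_bigl => s; rewrite !inE.
Qed.

Lemma cond_exp_arr_enum n1 n2 X (E : pred (seq bool)) :
  cond_exp n1 n2 X E =
  ((\sum_(s <- arr_enum (n1 + n2) n1 | E s) X s)%:R /
   (\sum_(s <- arr_enum (n1 + n2) n1 | E s) 1)%:R)%R.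
Proof. by rewrite /cond_exp -event_count_arr_enum -big_arrangements natr_sum. Qed.

Arguments arr_enum : simpl never.

Lemma big_addn_const (T : Type) (r : seq T) c (f : T -> nat) :
  \sum_(t <- r) (c + f t) = c * size r + \sum_(t <- r) f t.
Proof. by rewrite big_split -sum1_size big_distrr (eq_bigr _ (fun _ _ => muln1 c)). Qed.

Lemma big_runs_after_false n a p :
  \sum_(s <- arr_enum n.+1 a) runs_after false p s = 'C(n, a) * (a + p).
Proof.
elim: n a p => [|n IH] a p.
  by case: a => [|[|a]]; rewrite /arr_enum /= ?big_cons ?big_nil //=; case: p.
rewrite (big_arr_enum_cons (fun _ => true)) /= big_addn_const size_arr_enum IH.
case: a => [|a]; rewrite /= ?IH ?binS; case: p; nia.
Qed.

Lemma big_runs_after_true0 n p : \sum_(s <- arr_enum n 0) runs_after true p s = 0.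
Proof.
rewrite big_seq big1 // => s.
by rewrite mem_arr_enum => /andP [_ /eqP /runs_after_count0].
Qed.

Lemma big_runs_after_true n a p :
  \sum_(s <- arr_enum n.+1 a.+1) runs_after true p s = 'C(n, a) * (n - a + ~~ p).
Proof.
elim: n a p => [|n IH] a p.
  by case: a => [|a]; rewrite /arr_enum /= ?big_cons ?big_nil //=; case: p.
rewrite (big_arr_enum_cons (fun _ => true)) /= big_addn_const size_arr_enum IH.
case: a => [|a]; first by rewrite big_runs_after_true0 !bin0 !subn0; case: p; lia.
rewrite IH binS !subSS; case: (leqP a.+1 n) => [le_an|lt_na].
  have -> : n - a = (n - a.+1).+1 by lia.
  by case: p => /=; nia.
by rewrite (bin_small lt_na) (_ : n - a = 0) //; [case: p => /=; lia|lia].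
Qed.

Lemma mul_big_runs_after_false n a p :
  n * \sum_(s <- arr_enum n a) runs_after false p s = 'C(n, a) * ((n - a) * (a + p)).
Proof.
case: n => [|n]; first by rewrite !(mul0n, sub0n, muln0).
by rewrite big_runs_after_false mulnA (mul_bin_down n.+1) -mulnA mulnCA.
Qed.

Lemma mul_big_runs_after_true n a p :
  n * \sum_(s <- arr_enum n a) runs_after true p s = 'C(n, a) * (a * (n - a + ~~ p)).
Proof.
case: n => [|n]; first by case: a => [|a]; rewrite !(mul0n, muln0).
case: a => [|a]; first by rewrite big_runs_after_true0 !(muln0, mul0n).
by rewrite big_runs_after_true mulnA (mul_bin_diag n.+1) subSS -mulnA mulnCA.
Qed.

Lemma big_succ (T : Type) (r : seq T) (f : T -> nat) :
  \sum_(t <- r) (f t).+1 = size r + \sum_(t <- r) f t.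
Proof. by rewrite -sum1_size -big_split. Qed.

Local Open Scope ring_scope.

Lemma mean_shift {c s k q : nat} : (k * s = c * q)%N -> (0 < c)%N -> (0 < k)%N ->
  (c + s)%:R / c%:R = 1 + q%:R / k%:R :> rat.
Proof.
move=> /(congr1 (fun m => m%:R : rat)); rewrite !natrM natrD => ks c_gt0 k_gt0.
have kP : k%:R != 0 :> rat by rewrite pnatr_eq0 -lt0n.
have cP : c%:R != 0 :> rat by rewrite pnatr_eq0 -lt0n.
have -> : s%:R = c%:R * (q%:R / k%:R) :> rat by rewrite mulrA -ks [k%:R * _]mulrC mulfK.
by rewrite mulrDl divff // mulrC mulKf.
Qed.

Lemma natr_pred1 (R : pzRingType) n : n.+1%:R - 1 = n%:R :> R.
Proof. by rewrite -natr1 addrK. Qed.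

Lemma natr_pred2 (R : pzRingType) n : n.+2%:R - 2 = n%:R :> R.
Proof. by rewrite -[n.+2]addn2 natrD addrK. Qed.

Lemma cond_exp_R2_lt_R1 n1 n2 : (1 <= n1)%N -> (1 <= n2)%N ->
  (0 < event_count n1 n2 (fun s => (R1 s > R2 s)%N))%N ->
  cond_exp n1 n2 RM (fun s => (R1 s > R2 s)%N)
  = 2 + ((n1%:R - 2) * (n2%:R - 1)) / ((n1 + n2)%:R - 2).
Proof.
case: n1 => [|[|a]] // _; case: n2 => [|b] // _;
  rewrite event_count_arr_enum cond_exp_arr_enum !addSn addnS big_R2_lt_R1 // => _.
rewrite !natr_pred2 natr_pred1 big_R2_lt_R1 sum1_size size_arr_enum.
rewrite (eq_bigr _ (fun m _ => RM_ends true m true)) big_succ size_arr_enum.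
rewrite (mean_shift (mul_big_runs_after_false _ _ _)) //; last by rewrite bin_gt0; lia.
have -> : (((a + b).+1 - a) * (a + true) = (a + b).+1 + a * b)%N by lia.
by rewrite natrD mulrDl divff ?pnatr_eq0 // addrA natrM.
Qed.

Lemma cond_exp_R1_lt_R2 n1 n2 : (1 <= n1)%N -> (1 <= n2)%N ->
  (0 < event_count n1 n2 (fun s => (R1 s < R2 s)%N))%N ->
  cond_exp n1 n2 RM (fun s => (R1 s < R2 s)%N)
  = 2 + ((n1%:R - 1) * (n2%:R - 2)) / ((n1 + n2)%:R - 2).
Proof.
case: n1 => [|a] // _; case: n2 => [|[|b]] // _;
  rewrite event_count_arr_enum cond_exp_arr_enum !addSn ?addn1 ?addnS big_R1_lt_R2.
  by rewrite sum1_size size_arr_enum bin_small.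
rewrite !natr_pred2 natr_pred1 big_R1_lt_R2 sum1_size size_arr_enum => _.
rewrite (eq_bigr _ (fun m _ => RM_ends false m false)) big_succ size_arr_enum.
rewrite (mean_shift (mul_big_runs_after_true _ _ _)) //; last by rewrite bin_gt0; lia.
have -> : (a.+1 * ((a + b).+1 - a.+1 + ~~ false) = (a + b).+1 + a * b)%N by lia.
by rewrite natrD mulrDl divff ?pnatr_eq0 // addrA natrM.
Qed.

Lemma cond_exp_R1_eq_R2 n1 n2 : (1 <= n1)%N -> (1 <= n2)%N ->
  (0 < event_count n1 n2 (fun s => R1 s == R2 s))%N ->
  cond_exp n1 n2 RM (fun s => R1 s == R2 s)
  = 1 + ((n1%:R - 1) * (n2%:R - 1)) / ((n1 + n2)%:R - 2).
Proof.
case: n1 => [|a] // _; case: n2 => [|b] // _ _.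
rewrite cond_exp_arr_enum !addSn addnS !natr_pred1 natr_pred2.
rewrite !big_R1_eq_R2 !sum1_size !size_arr_enum.
rewrite (eq_bigr _ (fun m _ => RM_ends true m false)).
rewrite (eq_bigr _ (fun m _ => RM_ends false m true)) /= !big_succ size_arr_enum addnACA.
have [/eqP|k_gt0] := posnP (a + b).
  rewrite addn_eq0 => /andP [/eqP -> /eqP ->].
  by rewrite /arr_enum !big_seq1 mul0r addr0 divff.
have ks : ((a + b) * (\sum_(t <- arr_enum (a + b) a) runs_after true true t +
                     \sum_(t <- arr_enum (a + b) a) runs_after false false t)
          = ('C(a + b, a) + 'C(a + b, a)) * (a * b))%N.
  rewrite mulnDr mul_big_runs_after_true mul_big_runs_after_false.
  have -> : (a + b - a = b)%N by lia.
  nia.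
by rewrite (mean_shift ks) ?natrM // addn_gt0 bin_gt0 leq_addr.
Qed.

Theorem lemma2 (n1 n2 : nat) (h1 : (1 <= n1)%N) (h2 : (1 <= n2)%N) :
  ((0 < event_count n1 n2 (fun s => (R1 s > R2 s)%N))%N ->
     cond_exp n1 n2 RM (fun s => (R1 s > R2 s)%N)
     = 2 + ((n1%:R - 2) * (n2%:R - 1)) / ((n1 + n2)%:R - 2) :> rat)
  /\
  ((0 < event_count n1 n2 (fun s => (R1 s < R2 s)%N))%N ->
     cond_exp n1 n2 RM (fun s => (R1 s < R2 s)%N)
     = 2 + ((n1%:R - 1) * (n2%:R - 2)) / ((n1 + n2)%:R - 2) :> rat)
  /\
  ((0 < event_count n1 n2 (fun s => (R1 s == R2 s)%N))%N ->
     cond_exp n1 n2 RM (fun s => (R1 s == R2 s)%N)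
     = 1 + ((n1%:R - 1) * (n2%:R - 1)) / ((n1 + n2)%:R - 2) :> rat).
Proof.
split; last split.
- exact: cond_exp_R2_lt_R1.
- exact: cond_exp_R1_lt_R2.
- exact: cond_exp_R1_eq_R2.
Qed.
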